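(* Let $Q$ be a finite connected quandle, $A$ an abelian group, $\theta:Q\times Q\to A$ a quandle cocycle, and $E=Q\times_\theta A$. If $\theta$ is not cohomologous to the trivial cocycle (i.e. the cover $E$ of $Q$ is not trivial), then $Q$ has a connected cover of size $p\,|Q|$ for some prime $p$.
   Context: A quandle is a set $Q$ with a binary operation $*$ such that every left translation $L_x:y\mapsto x*y$ is bijective, $x*(y*z)=(x*y)*(x*z)$ and $x*x=x$; $Q$ is connected if $\langle L_x:x\in Q\rangle$ is transitive. A quandle cocycle with values in $A$ is $\theta:Q\times Q\to A$ with $\theta_{x*y,x*z}+\theta_{x,z}=\theta_{x,y*z}+\theta_{y,z}$ and $\theta_{x,x}=0$; $E=Q\times_\theta A$ is $Q\times A$ with $(x,a)*(y,b)=(x*y,\theta_{x,y}+b)$. $\theta$ is cohomologous to the trivial cocycle if there is $\gamma:Q\to\mathrm{Sym}_A$ with $(b\mapsto\theta_{x,y}+b)=\gamma_{x*y}\gamma_y^{-1}$ for all $x,y$ (equivalently, since $Q$ is connected, $\theta_{x,y}=\gamma_{x*y}-\gamma_y$ for some $\gamma:Q\to A$). A cover of $Q$ is a quandle $E'$ with a surjective homomorphism $\pi:E'\to Q$ such that $\pi(u)=\pi(v)$ implies $L_u=L_v$ in $E'$; it is connected if $E'$ is connected, and its size is $|E'|$. *)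

From mathcomp Require Import all_boot all_algebra.
Set Implicit Arguments. Unset Strict Implicit. Unset Printing Implicit Defensive.
Import GRing.Theory.
Local Open Scope ring_scope.

Definition is_quandle (T : Type) (op : T -> T -> T) : Prop :=
  [/\ (forall x, bijective (op x)),
      (forall x y z, op x (op y z) = op (op x y) (op x z)) &
      (forall x, op x x = x)].

(* [in_orbit op x y] : y lies in the orbit of x under the group generated
   by the left translations L_z = op z (closure under each L_z and each L_z^{-1}). *)
Inductive in_orbit (T : Type) (op : T -> T -> T) (x : T) : T -> Prop :=
  | orb_refl : in_orbit op x x
  | orb_L : forall z y, in_orbit op x y -> in_orbit op x (op z y)
  | orb_Linv : forall z w, in_orbit op x (op z w) -> in_orbit op x w.

Definition connected_q (T : Type) (op : T -> T -> T) : Prop :=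
  forall x y : T, in_orbit op x y.

Definition quandle_cocycle (Q : Type) (op : Q -> Q -> Q) (A : zmodType)
    (theta : Q -> Q -> A) : Prop :=
  (forall x y z, theta (op x y) (op x z) + theta x z = theta x (op y z) + theta y z)
  /\ (forall x, theta x x = 0).

(* theta cohomologous to the trivial cocycle: there is gamma : Q -> Sym_A with
   (b |-> theta x y + b) = gamma_{x*y} o gamma_y^{-1}, i.e.
   gamma_{x*y} b = theta x y + gamma_y b for all b. *)
Definition cohomologous_trivial (Q : Type) (op : Q -> Q -> Q) (A : zmodType)
    (theta : Q -> Q -> A) : Prop :=
  exists gamma : Q -> A -> A,
    (forall x, bijective (gamma x)) /\
    (forall x y b, gamma (op x y) b = theta x y + gamma y b).

Definition is_cover (E Q : Type) (opE : E -> E -> E) (op : Q -> Q -> Q)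
    (pi : E -> Q) : Prop :=
  [/\ is_quandle opE,
      (forall q, exists u, pi u = q),
      (forall u v, pi (opE u v) = op (pi u) (pi v)) &
      (forall u v, pi u = pi v -> forall w, opE u w = opE v w)].

From mathcomp Require Import all_boot all_order all_algebra.
From mathcomp Require Import boolp.
Set Implicit Arguments. Unset Strict Implicit. Unset Printing Implicit Defensive.
Import Order.TTheory GRing.Theory Num.Theory.
Local Open Scope ring_scope.

(* Twist theta by a coboundary so that every (y, 0) lies in the orbit of
   (q0, 0) in Q x A; as theta is not a coboundary, the twisted cocycle sigma is
   nonzero.  Its values generate a finitely generated abelian group, which has
   a map phi to F_p, additive on it, that does not kill some value of sigma:
   read off the coordinate of a generator outside the span of the others,
   modulo a prime dividing all its relations.  Pushing the orbit forward along
   phi, every (y, 0) is still reached in Q x F_p, and the reached part of the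
   fibre over q0 is closed under addition and contains the nonzero value
   phi (sigma x y), hence is all of F_p. *)

Section Orbits.
Variables (T : Type) (op : T -> T -> T).

Lemma in_orbit_trans x y z :
  in_orbit op x y -> in_orbit op y z -> in_orbit op x z.
Proof. by move=> xy; elim=> [|w z' _|w z' _]; [|apply: orb_L|apply: orb_Linv]. Qed.

Lemma in_orbit_sym x y : in_orbit op x y -> in_orbit op y x.
Proof.
elim=> [|z y' _ IH|z w _ IH]; first exact: orb_refl.
- by apply: in_orbit_trans IH; apply: (@orb_Linv _ _ _ z); apply: orb_refl.
- by apply: in_orbit_trans IH; apply: orb_L; apply: orb_refl.
Qed.

Lemma in_orbit_morph (T' : Type) (op' : T' -> T' -> T') (f : T -> T') :
    (forall u v, f (op u v) = op' (f u) (f v)) ->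
  forall x y, in_orbit op x y -> in_orbit op' (f x) (f y).
Proof.
move=> fM x y; elim=> [|z y' _ IH|z w _ IH]; first exact: orb_refl.
- by rewrite fM; apply: orb_L.
- by apply: (@orb_Linv _ _ _ (f z)); rewrite -fM.
Qed.

End Orbits.

Section Extension.
Variables (Q : Type) (op : Q -> Q -> Q) (B : zmodType).

Definition qext (c : Q -> Q -> B) (u v : Q * B) : Q * B :=
  (op u.1 v.1, c u.1 v.1 + v.2).

Variable c : Q -> Q -> B.

Lemma qext_quandle : is_quandle op -> quandle_cocycle op c -> is_quandle (qext c).
Proof.
case=> opK opD opxx [cD cxx]; split.
- move=> [x a]; have [g opxK gK] := opK x.
  exists (fun v => (g v.1, v.2 - c x (g v.1))) => -[y b]; rewrite /qext /=.
  + by rewrite opxK addrC addKr.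
  + by rewrite gK addrC subrK.
- by move=> [x a] [y b] [z d]; rewrite /qext /= opD !addrA cD.
- by move=> [x a]; rewrite /qext /= opxx cxx add0r.
Qed.

Lemma qext_cover : is_quandle op -> quandle_cocycle op c -> is_cover (qext c) op fst.
Proof.
move=> opQ cC; split=> //; first exact: qext_quandle.
- by move=> q; exists (q, 0).
- by move=> [x a] [y b] /= ->.
Qed.

Lemma in_orbit_qext_shift d x y : in_orbit (qext c) x y ->
  in_orbit (qext c) (x.1, x.2 + d) (y.1, y.2 + d).
Proof.
apply: (in_orbit_morph (f := fun u => (u.1, u.2 + d))) => -[x1 a] [y1 b].
by rewrite /qext /= addrA.
Qed.

Lemma in_orbit_qext_lift q0 y : in_orbit op q0 y ->
  exists b, in_orbit (qext c) (q0, 0) (y, b).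
Proof.
elim=> [|z y' _ [b Hb]|z w _ [b Hb]]; first by exists 0; apply: orb_refl.
- by exists (c z y' + b); apply: (@orb_L _ _ _ (z, 0) _ Hb).
- exists (b - c z w); apply: (@orb_Linv _ _ _ (z, 0)).
  by rewrite /qext /= addrC subrK.
Qed.

Section BasePoint.
Variable q0 : Q.
Hypothesis reach_fibre0 : forall y, in_orbit (qext c) (q0, 0) (y, 0).

Lemma in_orbit_qext_fibreD a b :
  in_orbit (qext c) (q0, 0) (q0, a) -> in_orbit (qext c) (q0, 0) (q0, b) ->
  in_orbit (qext c) (q0, 0) (q0, a + b).
Proof.
move=> reach_a /(in_orbit_qext_shift a); rewrite /= add0r addrC.
exact: in_orbit_trans.
Qed.

Lemma in_orbit_qext_cocycle x y : in_orbit (qext c) (q0, 0) (q0, c x y).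
Proof.
have reach_xy : in_orbit (qext c) (q0, 0) (op x y, c x y).
  by rewrite -[c x y]addr0; exact: (@orb_L _ _ _ (x, 0) _ (reach_fibre0 y)).
have := in_orbit_qext_shift (c x y) (reach_fibre0 (op x y)); rewrite /= !add0r.
by move=> shifted; apply: in_orbit_trans reach_xy (in_orbit_sym shifted).
Qed.

Lemma qext_connected :
  (forall a, in_orbit (qext c) (q0, 0) (q0, a)) -> connected_q (qext c).
Proof.
move=> reach_fibre.
have reach u : in_orbit (qext c) (q0, 0) u.
  case: u => y a; have := in_orbit_qext_shift a (reach_fibre0 y); rewrite /= !add0r.
  exact: in_orbit_trans.
by move=> u v; apply: in_orbit_trans (in_orbit_sym (reach u)) (reach v).
Qed.

End BasePoint.
End Extension.

Section Twist.
Variables (Q : Type) (op : Q -> Q -> Q) (B : zmodType) (c : Q -> Q -> B).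

Definition twist (h : Q -> B) x y := c x y + h y - h (op x y).

Lemma twist_cocycle h :
  is_quandle op -> quandle_cocycle op c -> quandle_cocycle op (twist h).
Proof.
case=> _ opD opxx [cD cxx]; split=> [x y z|x]; last first.
  by rewrite /twist cxx opxx add0r subrr.
have telescope a b d e : a + b - d + (e + h z - b) = a + e + h z - d.
  by rewrite addrAC addrACA subrr addr0 addrA.
by rewrite /twist -opD !telescope cD.
Qed.

Lemma in_orbit_qext_twist h x y : in_orbit (qext op c) x y ->
  in_orbit (qext op (twist h)) (x.1, x.2 - h x.1) (y.1, y.2 - h y.1).
Proof.
apply: (in_orbit_morph (f := fun u => (u.1, u.2 - h u.1))) => -[u a] [v b].
by rewrite /qext /twist /=; congr (_, _); rewrite [RHS]addrAC addrACA subrr addr0.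
Qed.

Lemma twist_eq0_cohomologous_trivial h :
  (forall x y, twist h x y = 0) -> cohomologous_trivial op c.
Proof.
move=> twist0; exists (fun x b => h x + b); split=> [x|x y b].
- by exists (fun b => b - h x) => b; rewrite addrC ?addKr ?subrK.
- by move/eqP: (twist0 x y); rewrite subr_eq0 => /eqP <-; rewrite addrA.
Qed.

Lemma exists_normalizing_twist q0 : connected_q op ->
  exists h, forall y, in_orbit (qext op (twist h)) (q0, 0) (y, 0).
Proof.
move=> opC; have [h reach_h] := choice (fun y => in_orbit_qext_lift c (opC q0 y)).
have reach y : in_orbit (qext op (twist h)) (q0, - h q0) (y, 0).
  by have := in_orbit_qext_twist h (reach_h y); rewrite /= sub0r subrr.
by exists h => y; apply: in_orbit_trans (in_orbit_sym (reach q0)) (reach y).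
Qed.

End Twist.

Section IntSpan.
Variables (A : zmodType) (T : finType) (v : T -> A).

Definition int_span (J : {set T}) (a : A) : Prop :=
  exists n : T -> int, a = \sum_(t in J) v t *~ n t.

Lemma sum_mulrz_delta (J : {set T}) j :
  j \in J -> \sum_(t in J) v t *~ (t == j) = v j.
Proof.
move=> jJ; rewrite (bigD1 j) //= eqxx mulr1z big1 ?addr0 // => t /andP[_ /negbTE->].
by rewrite mulr0z.
Qed.

Lemma int_span0 J : int_span J 0.
Proof. by exists (fun _ => 0); rewrite big1 // => t _; rewrite mulr0z. Qed.

Lemma int_spanD J a b : int_span J a -> int_span J b -> int_span J (a + b).
Proof.
move=> [m ->] [n ->]; exists (fun t => m t + n t).
by rewrite -big_split; apply: eq_bigr => t _; rewrite mulrzDr.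
Qed.

Lemma int_spanMz J a k : int_span J a -> int_span J (a *~ k).
Proof.
move=> [n ->]; exists (fun t => n t * k).
by rewrite mulrz_suml; apply: eq_bigr => t _; rewrite mulrzA.
Qed.

Lemma int_spanN J a : int_span J a -> int_span J (- a).
Proof. by move=> /(int_spanMz (-1)); rewrite mulrNz mulr1z. Qed.

Lemma int_spanB J a b : int_span J a -> int_span J b -> int_span J (a - b).
Proof. by move=> spa /int_spanN; apply: int_spanD. Qed.

Lemma int_span_mem (J : {set T}) j : j \in J -> int_span J (v j).
Proof. by move=> jJ; exists (fun t => (t == j)%:Z); rewrite sum_mulrz_delta. Qed.

Lemma int_span_trans (J K : {set T}) a :
  (forall j, j \in J -> int_span K (v j)) -> int_span J a -> int_span K a.
Proof.
move=> JK [n ->]; apply: (big_ind (int_span K)); first exact: int_span0.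
- exact: int_spanD.
- by move=> t tJ; apply/int_spanMz/JK.
Qed.

Lemma exists_independent_generator : (exists t, v t != 0) ->
  exists (J : {set T}) j0,
    [/\ j0 \in J, forall t, int_span J (v t) & ~ int_span (J :\ j0) (v j0)].
Proof.
move=> [t0 vt0].
have gen_setT :
    exists k, `[< exists J : {set T}, #|J| = k /\ forall t, int_span J (v t) >].
  exists #|T|; apply/asboolP; exists setT; split=> [|t]; first exact: cardsT.
  by apply: int_span_mem; rewrite inE.
case: (ex_minnP gen_setT) => _ /asboolP[J [<- genJ]] minJ.
have [j0 j0J] : exists j0, j0 \in J.
  case: (pickP (mem J)) => [j jJ|J0]; first by exists j.
  by case: (genJ t0) => n vt0E; rewrite vt0E big_pred0 ?eqxx in vt0.
exists J, j0; split=> // genJ0.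
have : (#|J| <= #|J :\ j0|)%N.
  apply/minJ/asboolP; exists (J :\ j0); split=> // t.
  apply: int_span_trans (genJ t) => j jJ; have [->|ne] := eqVneq j j0; first exact: genJ0.
  by apply: int_span_mem; rewrite !inE ne.
by rewrite (cardsD1 j0 J) j0J ltnn.
Qed.

(* The relations n form an ideal e Z with e <> 1: take p | e (any p if e = 0). *)
Lemma exists_prime_dvd_relations K a : ~ int_span K a ->
  exists2 p, prime p & forall n, int_span K (a *~ n) -> (p %| n)%Z.
Proof.
move=> Ka.
have [[n [nz Kan]]|] := EM (exists n, n != 0 /\ int_span K (a *~ n)); last first.
  move=> /forallNP noRel; exists 2%N => // n Kan.
  by have [->|nz] := eqVneq n 0; last by case: (noRel n).
have pos_rel : exists k, `[< (0 < k)%N /\ int_span K (a *~ k) >].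
  exists `|n|%N; apply/asboolP; split; first by rewrite absz_gt0.
  have [n_ge0|n_lt0] := lerP 0 n; first by rewrite gez0_abs.
  by rewrite ltz0_abs // mulrNz; apply: int_spanN.
case: (ex_minnP pos_rel) => e /asboolP[e_gt0 Kae] mine.
have e_gt1 : (1 < e)%N.
  rewrite ltn_neqAle e_gt0 andbT; apply/eqP=> e1.
  by apply: Ka; rewrite -e1 mulr1z in Kae.
exists (pdiv e); first exact: pdiv_prime.
move=> m Kam; apply: (@dvdz_trans e); first by rewrite dvdzE pdiv_dvd.
have Kar : int_span K (a *~ (m %% e)%Z).
  rewrite /modz mulrzBr mulrC mulrzA.
  by apply: int_spanB => //; apply: int_spanMz.
apply/dvdz_mod0P; apply: contraTeq (ltz_pmod m (e_gt0 : 0 < e%:Z)) => rnz.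
rewrite -leNgt -[(m %% e)%Z]gez0_abs ?modz_ge0 ?lez_nat //; last by rewrite -lt0n.
by apply/mine/asboolP; split; rewrite ?absz_gt0 ?gez0_abs ?modz_ge0 // -lt0n.
Qed.

Lemma relation_coef_int_span (J : {set T}) j0 (n : T -> int) : j0 \in J ->
  \sum_(t in J) v t *~ n t = 0 -> int_span (J :\ j0) (v j0 *~ n j0).
Proof.
move=> j0J; rewrite (bigD1 j0) //= => /eqP; rewrite addr_eq0 => /eqP ->.
by apply: int_spanN; exists n; apply: eq_bigl => t; rewrite !inE andbC.
Qed.

Lemma exists_Fp_morph : (exists t, v t != 0) ->
  exists2 p, prime p & exists phi : A -> 'F_p,
    (forall a b, int_span setT a -> int_span setT b -> phi (a + b) = phi a + phi b)
    /\ exists t, phi (v t) != 0.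
Proof.
move=> /exists_independent_generator[J [j0 [j0J genJ indep_j0]]].
have [p p_pr dvd_rel] := exists_prime_dvd_relations indep_j0.
have rep_ex a : exists n : T -> int, int_span J a -> a = \sum_(t in J) v t *~ n t.
  by have [[n aE]|nspan] := EM (int_span J a); [exists n | exists (fun _ => 0)].
have [rep repE] := choice rep_ex.
pose phi a : 'F_p := (rep a j0)%:~R.
have phiE a n : a = \sum_(t in J) v t *~ n t -> phi a = (n j0)%:~R.
  move=> aE; apply/eqP; rewrite -subr_eq0 -intrB -(dvdz_pcharf (pchar_Fp p_pr)).
  apply/dvd_rel/(@relation_coef_int_span _ _ (fun t => rep a t - n t)) => //.
  rewrite (eq_bigr (fun t => v t *~ rep a t - v t *~ n t)) => [|t _]; last exact: mulrzBr.
  by rewrite sumrB -aE -repE ?subrr //; exists n.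
exists p => //; exists phi; split=> [a b spa spb|].
- have [m aE] := int_span_trans (fun j _ => genJ j) spa.
  have [n bE] := int_span_trans (fun j _ => genJ j) spb.
  rewrite (phiE a m aE) (phiE b n bE) (phiE _ (fun t => m t + n t)) ?intrD // aE bE.
  by rewrite -big_split; apply: eq_bigr => t _; rewrite mulrzDr.
- by exists j0; rewrite (phiE _ _ (esym (sum_mulrz_delta j0J))) eqxx oner_eq0.
Qed.

End IntSpan.

Section Pushforward.
Variables (Q : finType) (op : Q -> Q -> Q) (A C : zmodType).
Variables (s : Q -> Q -> A) (phi : A -> C).
Hypothesis phiD : forall a b, int_span (uncurry s) setT a ->
  int_span (uncurry s) setT b -> phi (a + b) = phi a + phi b.

Lemma int_span_cocycle x y : int_span (uncurry s) setT (s x y).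
Proof. exact: (@int_span_mem _ _ _ _ (x, y)). Qed.
Local Hint Resolve int_span_cocycle : core.

Lemma morph_on_span0 : phi 0 = 0.
Proof.
have := phiD (int_span0 _ _) (int_span0 _ _); rewrite addr0.
by move/(congr1 (fun z => z - phi 0)); rewrite subrr addrK.
Qed.

Lemma cocycle_comp : quandle_cocycle op s -> quandle_cocycle op (fun x y => phi (s x y)).
Proof.
case=> sD sxx; split=> [x y z|x]; last by rewrite sxx morph_on_span0.
by rewrite -phiD // sD phiD.
Qed.

Lemma in_orbit_qext_comp q0 w : in_orbit (qext op s) (q0, 0) w ->
  in_orbit (qext op (fun x y => phi (s x y))) (q0, 0) (w.1, phi w.2).
Proof.
(* phi is only additive on the span, so membership in it is carried along. *)
move=> reach_w; suff [] : int_span (uncurry s) setT w.2 /\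
    in_orbit (qext op (fun x y => phi (s x y))) (q0, 0) (w.1, phi w.2) by [].
elim: reach_w => [|z y _ [Sy Oy]|z w' _ [Sw Ow]].
- by split; [apply: int_span0 | rewrite morph_on_span0; apply: orb_refl].
- split; first exact: int_spanD.
  by rewrite /= phiD //; exact: (@orb_L _ _ _ (z.1, 0) _ Oy).
- have Sw' : int_span (uncurry s) setT w'.2.
    by have := int_spanB Sw (int_span_cocycle z.1 w'.1); rewrite /= addrAC subrr add0r.
  split=> //; apply: (@orb_Linv _ _ _ (z.1, 0)).
  by move: Ow; rewrite /= phiD.
Qed.

End Pushforward.

Lemma qext_Fp_connected (Q : Type) (op : Q -> Q -> Q) p (psi : Q -> Q -> 'F_p)
    q0 x0 y0 :
  prime p -> psi x0 y0 != 0 -> (forall y, in_orbit (qext op psi) (q0, 0) (y, 0)) ->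
  connected_q (qext op psi).
Proof.
move=> p_pr psi0 reach0; apply: (qext_connected reach0) => a.
rewrite -[a](divfK psi0) -[a / _]natr_Zp mulr_natl.
elim: (nat_of_ord _) => [|k IH]; first by rewrite mulr0n; apply: orb_refl.
by rewrite mulrS; apply: in_orbit_qext_fibreD => //; apply: in_orbit_qext_cocycle.
Qed.

Theorem proposition2p11 (Q : finType) (op : Q -> Q -> Q) (A : zmodType)
    (theta : Q -> Q -> A) :
  is_quandle op -> connected_q op -> quandle_cocycle op theta ->
  ~ cohomologous_trivial op theta ->
  exists p : nat, prime p /\
    exists (E : finType) (opE : E -> E -> E) (pi : E -> Q),
      is_cover opE op pi /\ connected_q opE /\ #|E| = (p * #|Q|)%N.
Proof.
move=> opQ opC thetaC theta_nontriv.
have [q0 _ | Q0] := pickP (@predT Q); last first.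
  by case: theta_nontriv; exists (fun _ => id); split=> [x|x]; [exists id | have := Q0 x].
have [h reach0] := exists_normalizing_twist theta q0 opC.
set sigma := twist op theta h.
have [t0 sigma_t0] : exists t : Q * Q, uncurry sigma t != 0.
  apply: contra_notP theta_nontriv => /forallNP sigma0.
  apply: (twist_eq0_cohomologous_trivial (h := h)) => x y.
  exact/eqP/negPn/negP/(sigma0 (x, y)).
have [p p_pr [phi [phiD [[x1 y1] phi_xy1]]]] := exists_Fp_morph (ex_intro _ t0 sigma_t0).
exists p; split=> //; exists (Q * 'F_p)%type, (qext op (fun x y => phi (sigma x y))), fst.
split; first exact/qext_cover/cocycle_comp/twist_cocycle.
split; last by rewrite card_prod card_Fp // mulnC.
apply: (qext_Fp_connected (q0 := q0) p_pr phi_xy1) => y.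
by have := in_orbit_qext_comp phiD (reach0 y); rewrite /= (morph_on_span0 phiD).
Qed.
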